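(* Let $\Gamma\in\mathbb{R}^{p\times p}$ be a connected continuous-time interconnection, let $r\in\mathbb{R}^p$ satisfy $r^T\Gamma=0$, $r^T\mathbf 1=1$, and let $\Omega\in\mathbb{R}^{p\times p}$ be symmetric positive definite with $(\Gamma-\mathbf 1r^T)^T\Omega+\Omega(\Gamma-\mathbf 1r^T)=-I_p$. Then for every Riemann-integrable $Q:\mathbb{R}_{\ge0}\to\mathcal Q_n$, the solutions of $\dot x_i=Q_t\sum_{j\ne i}\gamma_{ij}(x_j-x_i)$, $i=1,\dots,p$, satisfy for all $t\ge0$ and all $i$ $$|x_i(t)-\bar x|\le\Big(\frac{\sigma_{\max}(\Omega)}{\sigma_{\min}(\Omega)}\sum_{j=1}^p|x_j(0)-\bar x|^2\Big)^{1/2},$$ where $\bar x:=(r^T\otimes I_n)\mathbf x(0)$ and $\mathbf x=[x_1^T\cdots x_p^T]^T$.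
   Context: $|\cdot|$ Euclidean norm; $\mathbf 1$ all-ones vector; $\otimes$ Kronecker product; $\sigma_{\max},\sigma_{\min}$ largest/smallest singular values; $\mathcal Q_n$ symmetric positive semidefinite $n\times n$ matrices. A continuous-time interconnection is $\Gamma=[\gamma_{ij}]$ with $\gamma_{ij}\ge0$ ($i\ne j$), $\gamma_{ii}=-\sum_{j\ne i}\gamma_{ij}$; its graph has directed edge $(n_i,n_j)$ iff $\gamma_{ij}>0$; connected means some node is reachable by a directed path from every other node. *)

From HB Require Import structures.
From mathcomp Require Import all_boot all_order all_algebra.
From mathcomp Require Import classical_sets boolp reals Rstruct.
From Coquelicot Require RInt Hierarchy.
From Stdlib Require Import Reals.

Set Implicit Arguments.
Unset Strict Implicit.
Unset Printing Implicit Defensive.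
Import Order.TTheory GRing.Theory Num.Theory.
Local Open Scope ring_scope.

Notation R := Rdefinitions.R.

Definition vnorm (n : nat) (v : 'cV[R]_n) : R :=
  Num.sqrt (\sum_(k < n) v k 0 ^+ 2).

Definition is_interconnection (p : nat) (G : 'M[R]_p) : Prop :=
  (forall i j : 'I_p, i != j -> 0 <= G i j) /\
  (forall i : 'I_p, G i i = - \sum_(j < p | j != i) G i j).

Definition edge (p : nat) (G : 'M[R]_p) : rel 'I_p := fun i j => 0 < G i j.

Definition connected_graph (p : nat) (G : 'M[R]_p) : Prop :=
  exists k : 'I_p, forall i : 'I_p, connect (edge G) i k.

Definition symmetric (n : nat) (A : 'M[R]_n) : Prop := A^T = A.

Definition psd (n : nat) (A : 'M[R]_n) : Prop :=
  symmetric A /\ forall v : 'cV[R]_n, 0 <= (v^T *m A *m v) 0 0.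

Definition pd (n : nat) (A : 'M[R]_n) : Prop :=
  symmetric A /\ forall v : 'cV[R]_n, v != 0 -> 0 < (v^T *m A *m v) 0 0.

Definition singular_value (n : nat) (A : 'M[R]_n) (s : R) : Prop :=
  0 <= s /\ eigenvalue (A^T *m A) (s ^+ 2).

Definition sigma_max (n : nat) (A : 'M[R]_n) : R :=
  sup [set s | singular_value A s].
Definition sigma_min (n : nat) (A : 'M[R]_n) : R :=
  inf [set s | singular_value A s].

Definition riemann_int_R (f : R -> R) : Prop :=
  forall T : R, 0 <= T -> @RInt.ex_RInt Hierarchy.R_NormedModule f 0 T.

Definition riemann_int_psd (n : nat) (Q : R -> 'M[R]_n) : Prop :=
  (forall t : R, 0 <= t -> psd (Q t)) /\
  (forall i j : 'I_n, riemann_int_R (fun t => Q t i j)).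

Definition rhs (p n : nat) (G : 'M[R]_p) (Q : R -> 'M[R]_n)
  (x : R -> 'I_p -> 'cV[R]_n) (i : 'I_p) (s : R) : 'cV[R]_n :=
  Q s *m (\sum_(j < p | j != i) G i j *: (x s j - x s i)).

(* solution on [0, oo) in integral (Caratheodory) form, with Riemann integrals *)
Definition is_solution (p n : nat) (G : 'M[R]_p) (Q : R -> 'M[R]_n)
  (x : R -> 'I_p -> 'cV[R]_n) : Prop :=
  forall (t : R), 0 <= t -> forall (i : 'I_p) (k : 'I_n),
    @RInt.ex_RInt Hierarchy.R_NormedModule (fun s => rhs G Q x i s k 0) 0 t /\
    x t i k 0 = x 0 i k 0 + @RInt.RInt Hierarchy.R_CompleteNormedModule (fun s => rhs G Q x i s k 0) 0 t.

(* xbar = (r^T (x) I_n) x(0) *)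
Definition xbar (p n : nat) (r : 'cV[R]_p) (x0 : 'I_p -> 'cV[R]_n) : 'cV[R]_n :=
  \sum_(j < p) r j 0 *: x0 j.

From HB Require Import structures.
From mathcomp Require Import all_boot all_order all_algebra.
From mathcomp Require Import classical_sets boolp reals Rstruct.
From mathcomp Require Import topology normedtype derive Rstruct_topology.
From Coquelicot Require Coquelicot.
From mathcomp Require Import lra ring.
Set Implicit Arguments.
Unset Strict Implicit.
Unset Printing Implicit Defensive.
Import Order.TTheory GRing.Theory Num.Theory.
Import numFieldNormedType.Exports.
Local Open Scope classical_set_scope.
Local Open Scope ring_scope.

(* Let X(t) be the n x p matrix of deviations x_i(t) - xbar, so that
   X' = Q X G^T.  Since r^T G = 0, the r-weighted average of the agents is
   conserved, i.e. X r = 0; hence G^T may be replaced by (G - 1 r^T)^T and the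
   Lyapunov equation turns the derivative of V = tr (X Om X^T) into
   - tr (X^T Q X) <= 0.  As Q is only Riemann integrable, V is not
   differentiated: on [a, b] its increment is the integral of this nonpositive
   quantity with X frozen at X(a), up to an O((b - a)^2) error, and summing over
   finer and finer partitions of [0, t] gives V(t) <= V(0).  The Rayleigh
   quotient of Om yields sigma_min |X|^2 <= V <= sigma_max |X|^2, whence the
   bound. *)

Section QuadraticForms.
Variable p : nat.
Implicit Types (A : 'M[R]_p) (u v w : 'rV[R]_p).

Definition bform A u w : R := (u *m A *m w^T) 0 0.
Definition qform A u : R := bform A u u.
Definition sqnorm u : R := qform 1%:M u.

Lemma bformDl A u v w : bform A (u + v) w = bform A u w + bform A v w.
Proof. by rewrite /bform !mulmxDl mxE. Qed.

Lemma bformDr A u v w : bform A w (u + v) = bform A w u + bform A w v.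
Proof. by rewrite /bform linearD /= mulmxDr mxE. Qed.

Lemma bformZl A c u w : bform A (c *: u) w = c * bform A u w.
Proof. by rewrite /bform -!scalemxAl mxE. Qed.

Lemma bformZr A c u w : bform A w (c *: u) = c * bform A w u.
Proof. by rewrite /bform linearZ /= -scalemxAr mxE. Qed.

Lemma bform_trmx A u w : bform A w u = bform A^T u w.
Proof.
rewrite /bform -[in LHS](trmxK (w *m A *m u^T)) mxE.
by rewrite !trmx_mul trmxK mulmxA.
Qed.

Lemma qformZ A c u : qform A (c *: u) = c ^+ 2 * qform A u.
Proof. by rewrite /qform bformZl bformZr mulrA expr2. Qed.

Lemma qformN A u : qform (- A) u = - qform A u.
Proof. by rewrite /qform /bform mulmxN mulNmx mxE. Qed.

Lemma qform_eigen A u a : u *m A = a *: u -> qform A u = a * sqnorm u.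
Proof. by move=> h; rewrite /sqnorm /qform /bform h mulmx1 -scalemxAl mxE. Qed.

Lemma qformE A u : qform A u = \sum_i \sum_j u 0 i * A i j * u 0 j.
Proof.
rewrite /qform /bform mxE.
under eq_bigr => j _ do rewrite [X in X * _]mxE big_distrl.
rewrite exchange_big; apply: eq_bigr => i _; apply: eq_bigr => j _.
by rewrite !mxE.
Qed.

Lemma sqnormE u : sqnorm u = \sum_i u 0 i ^+ 2.
Proof.
rewrite /sqnorm /qform /bform mulmx1 mxE.
by apply: eq_bigr => i _; rewrite mxE expr2.
Qed.

Lemma sqnorm_ge0 u : 0 <= sqnorm u.
Proof. by rewrite sqnormE; apply: sumr_ge0 => i _; exact: sqr_ge0. Qed.

Lemma sqnorm_eq0 u : (sqnorm u == 0) = (u == 0).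
Proof.
apply/idP/eqP => [|->]; last by rewrite /sqnorm /qform /bform !mul0mx mxE.
rewrite sqnormE psumr_eq0 => [/allP u0|i _]; last exact: sqr_ge0.
apply/rowP => i; rewrite mxE; apply/eqP; rewrite -sqrf_eq0.
by have /implyP := u0 i (mem_index_enum i); apply.
Qed.

Lemma sqnorm_gt0 u : (0 < sqnorm u) = (u != 0).
Proof. by rewrite lt_def sqnorm_eq0 sqnorm_ge0 andbT. Qed.

Lemma sqnormZ c u : sqnorm (c *: u) = c ^+ 2 * sqnorm u.
Proof. exact: qformZ. Qed.

Lemma continuous_qform A : continuous (qform A).
Proof.
have -> : qform A = fun u => \sum_(i <- index_enum 'I_p)
    \sum_(j <- index_enum 'I_p) u 0 i * A i j * u 0 j.
  by apply/funext => u; rewrite qformE.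
have add_cont : continuous (fun z : R^o * R^o => z.1 + z.2) := add_continuous.
apply: continuous_big => // i _; apply: continuous_big => // j _ u.
have -> : (fun u : 'rV[R]_p => u 0 i * A i j * u 0 j) =
    ((fun u => u 0 i) \* (fun=> A i j)) \* (fun u => u 0 j) by [].
apply: (@continuousM R); last exact: coord_continuous.
by apply: (@continuousM R); [exact: coord_continuous | exact: cst_continuous].
Qed.
End QuadraticForms.

Lemma first_variation_eq0 (a b : R) : (forall e, e * a + e ^+ 2 * b <= 0) -> a = 0.
Proof.
move=> h; set c := `|b| + 1.
have c0 : 0 < c by rewrite ltr_pwDr ?normr_ge0.
have bc : 1 <= b + c by have := ler_norm (- b); rewrite normrN /c; lra.
have := h (a / c); set e := a / c => he.
have ec : e * c = a by rewrite /e mulfVK ?gt_eqF.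
have : a ^+ 2 * (b + c) <= 0.
  have -> : a ^+ 2 * (b + c) = c ^+ 2 * (e * a + e ^+ 2 * b) by rewrite -{1 2}ec; ring.
  by rewrite pmulr_rle0 // exprn_gt0.
by move=> ha; apply/eqP; rewrite -sqrf_eq0 eq_le sqr_ge0 andbT; nra.
Qed.

Section Rayleigh.
Variables (p : nat) (A : 'M[R]_p).
Hypothesis (p_gt0 : (0 < p)%N) (symA : A^T = A).

Lemma sphere_max :
  exists2 u, sqnorm u = 1 & forall v, sqnorm v = 1 -> qform A v <= qform A u.
Proof.
pose S := [set u : 'rV[R]_p | sqnorm u = 1].
have S0 : S !=set0.
  exists (delta_mx 0 (Ordinal p_gt0)); rewrite /S /= sqnormE (bigD1 (Ordinal p_gt0)) //=.
  rewrite big1 => [|i /negbTE hi]; first by rewrite !mxE !eqxx expr1n addr0.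
  by rewrite mxE hi andbF expr0n.
have Scl : closed S.
  have := proj1 (continuous_closedP _) (@continuous_qform p 1%:M) [set x | x = 1].
  by apply; exact: closed_eq.
have Sb : bounded_set S.
  exists 1; split => // x x1 v Sv.
  rewrite /Num.norm /= mx_normrE; apply: bigmax_le; first lra.
  move=> [i j] _ /=; rewrite (ord1 i).
  have v2 : v 0 j ^+ 2 <= 1.
    rewrite -Sv sqnormE (bigD1 j) //= lerDl.
    by apply: sumr_ge0 => k _; exact: sqr_ge0.
  have : `|v 0 j| <= 1 by apply/ler_normlP; split; nra.
  lra.
have [u Su umax] := compact_EVT_max S0 (bounded_closed_compact Sb Scl)
  (continuous_subspaceT (@continuous_qform p A)).
by exists u => [|v Sv]; [move: Su | apply: umax]; rewrite inE.
Qed.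

Lemma qform_le_sphere_max u :
  (forall v, sqnorm v = 1 -> qform A v <= qform A u) ->
  forall v, qform A v <= qform A u * sqnorm v.
Proof.
move=> umax v; have [/eqP|vn0] := eqVneq (sqnorm v) 0.
  by rewrite sqnorm_eq0 => /eqP->; rewrite /sqnorm /qform /bform !mul0mx !mxE mulr0.
have v0 : 0 < sqnorm v by rewrite lt_def vn0 sqnorm_ge0.
set c := (Num.sqrt (sqnorm v))^-1.
have c2 : c ^+ 2 * sqnorm v = 1 by rewrite exprVn sqr_sqrtr ?sqnorm_ge0 // mulVf.
have c2_gt0 : 0 < c ^+ 2 by rewrite exprn_gt0 // invr_gt0 sqrtr_gt0.
have := umax (c *: v); rewrite sqnormZ qformZ => /(_ c2) cv_le.
by rewrite -(ler_pM2l c2_gt0) mulrCA c2 mulr1.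
Qed.

Lemma rayleigh_max : exists u, [/\ sqnorm u = 1, u *m A = qform A u *: u &
  forall v, qform A v <= qform A u * sqnorm v].
Proof.
have [u u1 /qform_le_sphere_max umax] := sphere_max.
exists u; split => //; set l := qform A u in umax *.
pose z := u *m A - l *: u.
(* Maximality of u along the line u + e z: the first-order term is 2 e |z|^2. *)
suff /eqP : 2 * sqnorm z = 0.
  by rewrite mulf_eq0 pnatr_eq0 sqnorm_eq0 subr_eq0 => /eqP.
apply: (@first_variation_eq0 _ (qform A z - l * sqnorm z)) => e.
have sqnorm_z : sqnorm z = bform A u z - l * bform 1%:M u z.
  by rewrite /sqnorm /qform {1}/z bformDl -scaleNr bformZl mulNr /bform mulmx1.
have h := umax (u + e *: z).
rewrite /sqnorm /qform !bformDl !bformDr !bformZl !bformZr in h.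
rewrite [bform _ z u]bform_trmx [bform 1%:M z u]bform_trmx symA trmx1 in h.
rewrite -[bform A z z]/(qform A z) -[bform 1%:M z z]/(sqnorm z) sqnorm_z in h.
rewrite -[bform 1%:M u u]/(sqnorm u) u1 -[bform A u u]/l in h.
rewrite sqnorm_z; lra.
Qed.

End Rayleigh.

Lemma rayleigh_min p (A : 'M[R]_p) : (0 < p)%N -> A^T = A ->
  exists u, [/\ sqnorm u = 1, u *m A = qform A u *: u &
                forall v, qform A u * sqnorm v <= qform A v].
Proof.
move=> p_gt0 symA.
have symNA : (- A)^T = - A by rewrite linearN /= symA.
have [u [u1 eu umin]] := rayleigh_max p_gt0 symNA.
exists u; split => [||v].
- exact: u1.
- by apply/eqP; rewrite -eqr_opp -mulmxN -scaleNr -qformN eu.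
- by have := umin v; rewrite !qformN mulNr lerN2.
Qed.

Section SingularValues.
Variables (p : nat) (A : 'M[R]_p).
Hypothesis p_gt0 : (0 < p)%N.

Lemma symmetric_eigen_singular_value (u : 'rV[R]_p) l : A^T = A -> u != 0 -> 0 <= l ->
  u *m A = l *: u -> singular_value A l.
Proof.
move=> symA u0 l0 eu; split => //; apply/eigenvalueP; exists u => //.
by rewrite symA mulmxA eu -scalemxAl eu scalerA expr2.
Qed.

Lemma singular_value_qform s : singular_value A s ->
  exists2 v : 'rV[R]_p, v != 0 & qform (A^T *m A) v = s ^+ 2 * sqnorm v.
Proof. by case=> _ /eigenvalueP [v ev v0]; exists v => //; exact: qform_eigen. Qed.

Lemma singular_values_ubound : has_ubound [set s | singular_value A s].
Proof.
have symAA : (A^T *m A)^T = A^T *m A by rewrite trmx_mul trmxK.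
have [w [_ _ wmax]] := rayleigh_max p_gt0 symAA.
exists (1 + qform (A^T *m A) w) => s /[dup] [[s0 _]] /singular_value_qform [v v0 ev].
have : s ^+ 2 <= qform (A^T *m A) w.
  by rewrite -(ler_pM2r (_ : 0 < sqnorm v)) ?sqnorm_gt0 // -ev wmax.
nra.
Qed.

Lemma singular_values_lbound_gt0 : A \in unitmx ->
  exists2 c, 0 < c & lbound [set s | singular_value A s] c.
Proof.
move=> Aunit.
have symAA : (A^T *m A)^T = A^T *m A by rewrite trmx_mul trmxK.
have [w [w1 _ wmin]] := rayleigh_min p_gt0 symAA.
set nu := qform (A^T *m A) w in wmin.
have nu_gt0 : 0 < nu.
  have -> : nu = sqnorm (w *m A^T).
    by rewrite /nu /sqnorm /qform /bform mulmx1 trmx_mul trmxK !mulmxA.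
  rewrite sqnorm_gt0 mulmx_free_eq0 ?row_free_unit ?unitmx_tr //.
  by rewrite -sqnorm_gt0 w1.
exists (nu / (1 + nu)) => [|s /[dup] [[s0 _]] /singular_value_qform [v v0 ev]].
  by rewrite divr_gt0 // ltr_pwDr.
have : nu <= s ^+ 2.
  by rewrite -(ler_pM2r (_ : 0 < sqnorm v)) ?sqnorm_gt0 // -ev wmin.
(* s < nu / (1 + nu) < 1 would give s ^+ 2 <= s < nu. *)
by rewrite ler_pdivrMr ?ltr_pwDr //; nra.
Qed.

End SingularValues.

Lemma pd_qform_gt0 p (A : 'M[R]_p) u : pd A -> u != 0 -> 0 < qform A u.
Proof.
case=> _ Apos u0; have := Apos u^T; rewrite trmxK; apply.
by apply: contra u0 => /eqP u0; rewrite -(trmxK u) u0 trmx0.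
Qed.

Lemma pd_unitmx p (A : 'M[R]_p) : pd A -> A \in unitmx.
Proof.
move=> Apd; rewrite -row_free_unit; apply: inj_row_free => v vA0.
apply/eqP/contraT => v0; have := pd_qform_gt0 Apd v0.
by rewrite /qform /bform vA0 mul0mx mxE ltxx.
Qed.

Lemma pd_qform_bounds p (A : 'M[R]_p) : (0 < p)%N -> pd A ->
  [/\ 0 < sigma_min A, forall v, sigma_min A * sqnorm v <= qform A v &
      forall v, qform A v <= sigma_max A * sqnorm v].
Proof.
move=> p_gt0 Apd; have symA : A^T = A by case: Apd.
have [u1 [u1_1 eu1 umax]] := rayleigh_max p_gt0 symA.
have [u2 [u2_1 eu2 umin]] := rayleigh_min p_gt0 symA.
have eigen_sv u : sqnorm u = 1 -> u *m A = qform A u *: u ->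
    singular_value A (qform A u).
  move=> u_1 eu; have u0 : u != 0 by rewrite -sqnorm_gt0 u_1.
  by apply: symmetric_eigen_singular_value eu => //; exact/ltW/pd_qform_gt0.
have sv1 := eigen_sv u1 u1_1 eu1; have sv2 := eigen_sv u2 u2_1 eu2.
have [c c0 cS] := singular_values_lbound_gt0 p_gt0 (pd_unitmx Apd).
split=> [|v|v].
- by apply: lt_le_trans c0 _; apply: lb_le_inf cS; exists (qform A u2).
- apply: le_trans (umin v); apply: ler_wpM2r; first exact: sqnorm_ge0.
  by apply: (ge_inf _ sv2); exists 0 => s [].
- apply: le_trans (umax v) _; apply: ler_wpM2r; first exact: sqnorm_ge0.
  apply: (sup_upper_bound _ sv1); split; first by exists (qform A u1).
  exact: singular_values_ubound.
Qed.

Notation ex_RInt_R := (@RInt.ex_RInt Hierarchy.R_NormedModule).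
Notation RInt_R := (@RInt.RInt Hierarchy.R_CompleteNormedModule).

Section RealIntegral.
Implicit Types (f g : R -> R) (a b c : R).

Lemma ex_RInt_R_plus f g a b : ex_RInt_R f a b -> ex_RInt_R g a b ->
  ex_RInt_R (fun s => f s + g s) a b.
Proof. exact: RInt.ex_RInt_plus. Qed.

Lemma RInt_R_plus f g a b : ex_RInt_R f a b -> ex_RInt_R g a b ->
  RInt_R (fun s => f s + g s) a b = RInt_R f a b + RInt_R g a b.
Proof. exact: (@RInt.RInt_plus Hierarchy.R_CompleteNormedModule). Qed.

Lemma ex_RInt_R_minus f g a b : ex_RInt_R f a b -> ex_RInt_R g a b ->
  ex_RInt_R (fun s => f s - g s) a b.
Proof. exact: RInt.ex_RInt_minus. Qed.

Lemma RInt_R_minus f g a b : ex_RInt_R f a b -> ex_RInt_R g a b ->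
  RInt_R (fun s => f s - g s) a b = RInt_R f a b - RInt_R g a b.
Proof. exact: (@RInt.RInt_minus Hierarchy.R_CompleteNormedModule). Qed.

Lemma ex_RInt_R_scal f c a b : ex_RInt_R f a b -> ex_RInt_R (fun s => c * f s) a b.
Proof. exact: RInt.ex_RInt_scal. Qed.

Lemma RInt_R_scal f c a b : ex_RInt_R f a b ->
  RInt_R (fun s => c * f s) a b = c * RInt_R f a b.
Proof. exact: (@RInt.RInt_scal Hierarchy.R_CompleteNormedModule). Qed.

Lemma RInt_R_0 a b : RInt_R (fun=> 0) a b = 0.
Proof. by rewrite RInt.RInt_const /Hierarchy.scal /= /Hierarchy.mult /= RmultE mulr0. Qed.

Lemma ex_RInt_R_sum (I : Type) (l : seq I) (F : I -> R -> R) a b :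
  (forall i, ex_RInt_R (F i) a b) -> ex_RInt_R (fun s => \sum_(i <- l) F i s) a b.
Proof.
move=> exF; elim: l => [|i l IH].
  by under eq_fun do rewrite big_nil; exact: RInt.ex_RInt_const.
by under eq_fun do rewrite big_cons; exact: ex_RInt_R_plus.
Qed.

Lemma RInt_R_sum (I : Type) (l : seq I) (F : I -> R -> R) a b :
  (forall i, ex_RInt_R (F i) a b) ->
  RInt_R (fun s => \sum_(i <- l) F i s) a b = \sum_(i <- l) RInt_R (F i) a b.
Proof.
move=> exF; elim: l => [|i l IH].
  by under eq_fun do rewrite big_nil; rewrite RInt_R_0 big_nil.
under eq_fun do rewrite big_cons.
by rewrite RInt_R_plus ?IH ?big_cons //; exact: ex_RInt_R_sum.
Qed.

Lemma ex_RInt_R_subinterval f a b c d : a <= c -> c <= d -> d <= b ->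
  ex_RInt_R f a b -> ex_RInt_R f c d.
Proof.
move=> ac cd db exf.
have exf_ad : ex_RInt_R f a d.
  apply: (@RInt.ex_RInt_Chasles_1 Hierarchy.R_CompleteNormedModule f a d b) => //.
  by split; apply/RleP; [exact: le_trans cd|].
by apply: (@RInt.ex_RInt_Chasles_2 Hierarchy.R_CompleteNormedModule f a c d) => //; split; apply/RleP.
Qed.

Lemma RInt_R_Chasles f a b c : ex_RInt_R f a b -> ex_RInt_R f b c ->
  RInt_R f a b + RInt_R f b c = RInt_R f a c.
Proof. exact: (@RInt.RInt_Chasles Hierarchy.R_CompleteNormedModule). Qed.

Lemma norm_RInt_R_le f a b M : a <= b -> ex_RInt_R f a b ->
  (forall s, a <= s <= b -> `|f s| <= M) -> `|RInt_R f a b| <= (b - a) * M.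
Proof.
move=> ab exf fM; rewrite -RabsE; apply/RleP.
apply: RInt.abs_RInt_le_const => //; first exact/RleP.
by move=> s [sa sb]; rewrite RabsE; apply/RleP/fM; apply/andP; split; apply/RleP.
Qed.

Lemma RInt_R_le0 f a b : a <= b -> ex_RInt_R f a b ->
  (forall s, a <= s <= b -> f s <= 0) -> RInt_R f a b <= 0.
Proof.
move=> ab exf f_le0; rewrite -(RInt_R_0 a b); apply/RleP.
apply: RInt.RInt_le => //; first exact/RleP; first exact: RInt.ex_RInt_const.
by move=> s [sa sb]; apply/RleP/f_le0; apply/andP; split; apply/ltW/RltP.
Qed.

Lemma ex_RInt_R_bounded f a b : a <= b -> ex_RInt_R f a b ->
  exists M, forall s, a <= s <= b -> `|f s| <= M.
Proof.
move=> ab /RInt.ex_RInt_ub [M fM]; exists M => s /andP [sa sb].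
rewrite -RabsE; apply/RleP; apply: fM.
by rewrite RminE RmaxE; split; apply/RleP; rewrite ?ge_min ?le_max ?sa ?sb ?orbT.
Qed.

End RealIntegral.

Lemma mxE_sub m n (A B : 'M[R]_(m, n)) i j : (A - B) i j = A i j - B i j.
Proof. by rewrite !mxE. Qed.

Section EntrywiseBounds.
Implicit Types (c d : R).

Definition mxbound m n (A : 'M[R]_(m, n)) c := forall i j, `|A i j| <= c.

Lemma mxbound_le m n (A : 'M[R]_(m, n)) c d : c <= d -> mxbound A c -> mxbound A d.
Proof. by move=> cd Ac i j; exact: le_trans (Ac i j) cd. Qed.

Lemma mxbound_mul m k n (A : 'M[R]_(m, k)) (B : 'M[R]_(k, n)) c d :
  mxbound A c -> mxbound B d -> mxbound (A *m B) (k%:R * (c * d)).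
Proof.
move=> Ac Bd i j; rewrite mxE; apply: le_trans (ler_norm_sum _ _ _) _.
rewrite -[k in k%:R]card_ord -sum1_card natr_sum big_distrl /=.
by apply: ler_sum => l _; rewrite mul1r normrM ler_pM ?normr_ge0 ?Ac ?Bd.
Qed.

Lemma mxbound_trmx m n (A : 'M[R]_(m, n)) c : mxbound A c -> mxbound A^T c.
Proof. by move=> Ac i j; rewrite mxE. Qed.

Lemma norm_mxtrace_le n (A : 'M[R]_n) c : mxbound A c -> `|\tr A| <= n%:R * c.
Proof.
move=> Ac; apply: le_trans (ler_norm_sum _ _ _) _.
rewrite -[n in n%:R]card_ord -sum1_card natr_sum big_distrl /=.
by apply: ler_sum => i _; rewrite mul1r.
Qed.

Lemma mxbound_exists m n (A : 'M[R]_(m, n)) : exists2 c, 0 <= c & mxbound A c.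
Proof.
exists (\sum_i \sum_j `|A i j|) => [|i j].
  by do 2![apply: sumr_ge0 => ? _]; exact: normr_ge0.
rewrite (bigD1 i) //= (bigD1 j) //= -addrA lerDl addr_ge0 //.
  by apply: sumr_ge0 => ? _; exact: normr_ge0.
by do 2![apply: sumr_ge0 => ? _]; exact: normr_ge0.
Qed.

End EntrywiseBounds.

Definition mxRInt m n (H : R -> 'M[R]_(m, n)) a b : 'M[R]_(m, n) :=
  \matrix_(i, j) RInt_R (fun s => H s i j) a b.

Section MatrixIntegral.
Variables (m n : nat) (H : R -> 'M[R]_(m, n)) (a b : R).
Hypothesis exH : forall i j, ex_RInt_R (fun s => H s i j) a b.

Lemma ex_RInt_R_mulmxr l (W : 'M[R]_(n, l)) i k :
  ex_RInt_R (fun s => (H s *m W) i k) a b.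
Proof.
have -> : (fun s => (H s *m W) i k) = fun s => \sum_j W j k * H s i j.
  by apply/funext => s; rewrite mxE; apply: eq_bigr => j _; rewrite mulrC.
by apply: ex_RInt_R_sum => j; exact: ex_RInt_R_scal.
Qed.

Lemma mxRInt_mulmxr l (W : 'M[R]_(n, l)) :
  mxRInt H a b *m W = mxRInt (fun s => H s *m W) a b.
Proof.
apply/matrixP => i k; rewrite !mxE.
have -> : (fun s => (H s *m W) i k) = fun s => \sum_j W j k * H s i j.
  by apply/funext => s; rewrite mxE; apply: eq_bigr => j _; rewrite mulrC.
rewrite RInt_R_sum => [|j]; last exact: ex_RInt_R_scal.
by apply: eq_bigr => j _; rewrite RInt_R_scal // mxE mulrC.
Qed.

Lemma ex_RInt_R_mxtrace (W : 'M[R]_(n, m)) :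
  ex_RInt_R (fun s => \tr (H s *m W)) a b.
Proof. by apply: ex_RInt_R_sum => i; exact: ex_RInt_R_mulmxr. Qed.

Lemma mxtrace_mxRInt (W : 'M[R]_(n, m)) :
  \tr (mxRInt H a b *m W) = RInt_R (fun s => \tr (H s *m W)) a b.
Proof.
rewrite mxRInt_mulmxr /mxtrace RInt_R_sum => [|i]; last exact: ex_RInt_R_mulmxr.
by apply: eq_bigr => i _; rewrite mxE.
Qed.

Lemma mxbound_mxRInt c : a <= b -> (forall s, a <= s <= b -> mxbound (H s) c) ->
  mxbound (mxRInt H a b) ((b - a) * c).
Proof.
by move=> ab Hc i j; rewrite mxE; apply: norm_RInt_R_le => // s /Hc; apply.
Qed.

Lemma mx_ex_RInt_R_bounded : a <= b -> exists2 c, 0 <= c & forall s, a <= s <= b -> mxbound (H s) c.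
Proof.
move=> ab; have /boolp.choice [c Hc] : forall ij : 'I_m * 'I_n,
    exists c, forall s, a <= s <= b -> `|H s ij.1 ij.2| <= c.
  by case=> i j; exact: ex_RInt_R_bounded.
exists (\sum_ij `|c ij|) => [|s sab i j]; first by apply: sumr_ge0 => ? _.
apply: le_trans (Hc (i, j) s sab) (le_trans (ler_norm _) _).
by rewrite (bigD1 (i, j)) //= lerDl; apply: sumr_ge0 => ? _.
Qed.

End MatrixIntegral.

Lemma mxtrace_quad_expand p n (A : 'M[R]_p) (X D : 'M[R]_(n, p)) : A^T = A ->
  \tr ((X + D) *m A *m (X + D)^T) - \tr (X *m A *m X^T) =
  2 * \tr (D *m (A *m X^T)) + \tr (D *m A *m D^T).
Proof.
move=> symA; have cross : \tr (X *m A *m D^T) = \tr (D *m (A *m X^T)).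
  by rewrite -mxtrace_tr !trmx_mul trmxK symA mulmxA.
rewrite linearD /= !mulmxDr !mulmxDl !mxtraceD cross mulmxA -!mulmxA.
by rewrite mulr2n mulrDl mul1r; ring.
Qed.

Lemma psd_mxtrace_conj_ge0 m n (P : 'M[R]_n) (X : 'M[R]_(n, m)) :
  psd P -> 0 <= \tr (X^T *m P *m X).
Proof.
case=> _ Ppos; apply: sumr_ge0 => i _.
have -> : (X^T *m P *m X) i i = ((col i X)^T *m P *m col i X) 0 0.
  rewrite !mxE; apply: eq_bigr => j _; rewrite !mxE; congr (_ * _).
  by apply: eq_bigr => k _; rewrite !mxE.
exact: Ppos.
Qed.

Lemma lyapunov_mxtrace p n (G A : 'M[R]_p) (r : 'cV[R]_p) (P : 'M[R]_n)
    (X : 'M[R]_(n, p)) : A^T = A -> P^T = P -> X *m r = 0 ->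
  (G - const_mx 1 *m r^T)^T *m A + A *m (G - const_mx 1 *m r^T) = - 1%:M ->
  2 * \tr (P *m X *m G^T *m (A *m X^T)) = - \tr (X^T *m P *m X).
Proof.
move=> symA symP Xr; set L := G - _ => lyapL.
have XG : X *m G^T = X *m L^T.
  by rewrite /L linearB /= trmx_mul trmxK mulmxBr mulmxA Xr mul0mx subr0.
rewrite -[P *m X *m G^T]mulmxA XG !mulmxA.
have sym_tr : \tr (P *m X *m L^T *m A *m X^T) = \tr (P *m X *m (A *m L) *m X^T).
  rewrite -mxtrace_tr !trmx_mul !trmxK symA symP !mulmxA mxtrace_mulC.
  by rewrite !mulmxA.
have -> : 2 * \tr (P *m X *m L^T *m A *m X^T) =
    \tr (P *m X *m (L^T *m A + A *m L) *m X^T).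
  by rewrite mulr2n mulrDl mul1r {2}sym_tr -mxtraceD mulmxDr mulmxDl !mulmxA.
by rewrite lyapL mulmxN mulmx1 mulNmx raddfN /= mxtrace_mulC mulmxA.
Qed.

Lemma mxtrace_conj_rows p n (A : 'M[R]_p) (X : 'M[R]_(n, p)) :
  \tr (X *m A *m X^T) = \sum_k qform A (row k X).
Proof.
apply: eq_bigr => k _; rewrite /qform /bform !mxE; apply: eq_bigr => j _.
by rewrite !mxE; congr (_ * _); apply: eq_bigr => l _; rewrite !mxE.
Qed.

Lemma pd_mxtrace_conj_bounds p n (A : 'M[R]_p) (X : 'M[R]_(n, p)) :
  (0 < p)%N -> pd A ->
  sigma_min A * \sum_k \sum_i X k i ^+ 2 <= \tr (X *m A *m X^T) <=
  sigma_max A * \sum_k \sum_i X k i ^+ 2.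
Proof.
move=> p_gt0 Apd; have [_ Amin Amax] := pd_qform_bounds p_gt0 Apd.
have rowE k : \sum_i X k i ^+ 2 = sqnorm (row k X).
  by rewrite sqnormE; apply: eq_bigr => i _; rewrite mxE.
rewrite mxtrace_conj_rows !big_distrr /=; apply/andP; split.
  by apply: ler_sum => k _; rewrite rowE.
by apply: ler_sum => k _; rewrite rowE.
Qed.

Lemma le0_of_le_div (d c : R) : (forall N : nat, d <= c / N.+1%:R) -> d <= 0.
Proof.
move=> dc; have [c_le0|c_gt0] := leP c 0.
  by apply: le_trans (dc 0%N) _; rewrite divr1.
rewrite leNgt; apply/negP => d_gt0.
have := dc (Num.truncn (c / d)); rewrite ler_pdivlMr ?ltr0Sn // => dN.
have := truncnS_gt (c / d); rewrite ltr_pdivrMr //; nra.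
Qed.

Lemma le_of_quadratic_increments (f : R -> R) (C T : R) : 0 <= T ->
  (forall a b, 0 <= a -> a <= b -> b <= T -> f b - f a <= C * (b - a) ^+ 2) ->
  f T <= f 0.
Proof.
move=> T0 fC; rewrite -subr_le0; apply: (@le0_of_le_div _ (C * T ^+ 2)) => N.
set h := T / N.+1%:R; set t := fun m : nat => m%:R * h.
have N0 : 0 < N.+1%:R :> R by rewrite ltr0Sn.
have h0 : 0 <= h by rewrite divr_ge0 // ltW.
have tN : t N.+1 = T by rewrite /t /h mulrC divfK ?gt_eqF.
have -> : f T - f 0 = \sum_(0 <= m < N.+1) (f (t m.+1) - f (t m)).
  by rewrite telescope_sumr // tN /t mul0r.
have -> : C * T ^+ 2 / N.+1%:R = \sum_(0 <= m < N.+1) C * h ^+ 2.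
  by rewrite sumr_const_nat subn0 /h -mulr_natr; field; rewrite addrC natr1 pnatr_eq0.
apply: ler_sum_nat => m /andP [_ mN].
have -> : h = t m.+1 - t m by rewrite /t -mulrBl -natrB // subSnn mul1r.
apply: fC; rewrite /t.
- by rewrite mulr_ge0 ?ler0n.
- by rewrite ler_wpM2r // ler_nat.
- by rewrite -tN /t ler_wpM2r // ler_nat.
Qed.

Section ConsensusDynamics.
Variables (p n : nat) (G : 'M[R]_p) (r : 'cV[R]_p).
Variables (Q : R -> 'M[R]_n) (x : R -> 'I_p -> 'cV[R]_n).
Hypotheses (HG : is_interconnection G) (Hx : is_solution G Q x).
Hypotheses (Hr1 : r^T *m G = 0) (Hr2 : r^T *m const_mx 1 = 1).

Definition dev (t : R) : 'M[R]_(n, p) := \matrix_(k, i) (x t i k 0 - xbar r (x 0) k 0).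

Lemma vnorm_dev t j : vnorm (x t j - xbar r (x 0)) = Num.sqrt (\sum_k dev t k j ^+ 2).
Proof. by congr Num.sqrt; apply: eq_bigr => k _; rewrite !mxE. Qed.

Definition flow (s : R) : 'M[R]_(n, p) := Q s *m dev s *m G^T.

(* Zero row sums turn sum_(j != i) G i j (x_j - x_i) into sum_j G i j (x_j - xbar). *)
Lemma rhs_flow i s k : rhs G Q x i s k 0 = flow s k i.
Proof.
have [_ Gii] := HG; rewrite /rhs /flow -mulmxA !mxE; apply: eq_bigr => l _.
congr (_ * _); rewrite summxE mxE [RHS](bigD1 i) //= !mxE Gii mulrN big_distrr.
rewrite /= addrC -sumrB; apply: eq_bigr => j _; rewrite !mxE; lra.
Qed.

Lemma dev_increment a b : 0 <= a -> a <= b ->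
  (forall k i, ex_RInt_R (fun s => flow s k i) a b) /\
  dev b - dev a = mxRInt flow a b.
Proof.
move=> a0 ab.
have sol (t : R) k i : 0 <= t -> ex_RInt_R (fun s => flow s k i) 0 t /\
    dev t k i = dev 0 k i + RInt_R (fun s => flow s k i) 0 t.
  move=> t0; have [ex_t x_t] := Hx t0 i k.
  have -> : (fun s => flow s k i) = fun s => rhs G Q x i s k 0.
    by apply/funext => s; rewrite rhs_flow.
  by split => //; rewrite !mxE x_t; lra.
have ex_ab k i : ex_RInt_R (fun s => flow s k i) a b.
  exact: ex_RInt_R_subinterval a0 ab (lexx b) (sol b k i (le_trans a0 ab)).1.
split => //; apply/matrixP => k i.
have [ex_a dev_a] := sol a k i a0; have [_ dev_b] := sol b k i (le_trans a0 ab).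
rewrite -(RInt_R_Chasles ex_a (ex_ab k i)) in dev_b.
by rewrite [LHS]mxE [(- dev a) k i]mxE [RHS]mxE dev_b dev_a; lra.
Qed.

Lemma dev0_mulr : dev 0 *m r = 0.
Proof.
have r1 : \sum_i r i 0 = 1.
  have := congr1 (fun M : 'M[R]_1 => M 0 0) Hr2; rewrite !mxE eqxx mulr1n => <-.
  by apply: eq_bigr => i _; rewrite !mxE mulr1.
apply/matrixP => k j; rewrite (ord1 j) !mxE.
under eq_bigr do rewrite !mxE mulrBl.
rewrite sumrB -big_distrr /= r1 mulr1 /xbar summxE; apply/eqP; rewrite subr_eq0.
by apply/eqP/eq_bigr => i _; rewrite mxE mulrC.
Qed.

Lemma flow_mulr s : flow s *m r = 0.
Proof.
have Gr : G^T *m r = 0 by rewrite -[r]trmxK -trmx_mul Hr1 trmx0.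
by rewrite /flow -mulmxA Gr mulmx0.
Qed.

Lemma dev_mulr t : 0 <= t -> dev t *m r = 0.
Proof.
move=> t0; have [exF incr] := dev_increment (lexx 0) t0.
rewrite -[dev t](subrK (dev 0)) incr mulmxDl dev0_mulr addr0 mxRInt_mulmxr //.
apply/matrixP => k j; rewrite !mxE -[RHS](RInt_R_0 0 t); congr RInt_R.
by apply/funext => s; rewrite flow_mulr mxE.
Qed.

Variable Om : 'M[R]_p.
Hypotheses (symOm : Om^T = Om) (HQ : riemann_int_psd Q).
Hypothesis HL :
  (G - const_mx 1 *m r^T)^T *m Om + Om *m (G - const_mx 1 *m r^T) = - 1%:M.

Definition lyap t := \tr (dev t *m Om *m (dev t)^T).

Lemma ex_RInt_R_Q a b i j : 0 <= a -> a <= b -> ex_RInt_R (fun s => Q s i j) a b.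
Proof.
move=> a0 ab; have b0 := le_trans a0 ab.
exact: ex_RInt_R_subinterval a0 ab (lexx b) (HQ.2 i j b b0).
Qed.

Definition flow_at a s : 'M[R]_(n, p) := Q s *m dev a *m G^T.

Lemma ex_RInt_R_flow_at a b c k i : 0 <= a -> a <= b ->
  ex_RInt_R (fun s => flow_at c s k i) a b.
Proof.
move=> a0 ab; under eq_fun do rewrite /flow_at -mulmxA.
by apply: ex_RInt_R_mulmxr => ? ?; exact: ex_RInt_R_Q.
Qed.

Lemma ex_RInt_R_flow_err a b k i : 0 <= a -> a <= b ->
  ex_RInt_R (fun s => (flow s - flow_at a s) k i) a b.
Proof.
move=> a0 ab; under eq_fun do rewrite mxE_sub.
by apply: ex_RInt_R_minus; [exact: (dev_increment a0 ab).1 | exact: ex_RInt_R_flow_at].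
Qed.

Lemma lyap_increment_le a b : 0 <= a -> a <= b ->
  lyap b - lyap a <=
  2 * \tr (mxRInt (fun s => flow s - flow_at a s) a b *m (Om *m (dev a)^T)) +
  \tr ((dev b - dev a) *m Om *m (dev b - dev a)^T).
Proof.
move=> a0 ab; have [exF incr] := dev_increment a0 ab.
set Xa := dev a; set D := dev b - Xa.
have DE : D = mxRInt (flow_at a) a b + mxRInt (fun s => flow s - flow_at a s) a b.
  apply/matrixP => k i; rewrite /D incr !mxE.
  have -> : (fun s => (flow s - flow_at a s) k i) =
      fun s => flow s k i - flow_at a s k i by apply/funext => s; exact: mxE_sub.
  by rewrite RInt_R_minus //; [lra | exact: ex_RInt_R_flow_at].
have first_order_le0 : \tr (mxRInt (flow_at a) a b *m (Om *m Xa^T)) <= 0.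
  rewrite mxtrace_mxRInt => [|k i]; last exact: ex_RInt_R_flow_at.
  apply: RInt_R_le0 => // [|s /andP [sa _]].
    by apply: ex_RInt_R_mxtrace => k i; exact: ex_RInt_R_flow_at.
  have Qs := HQ.1 s (le_trans a0 sa).
  have := lyapunov_mxtrace symOm (proj1 Qs) (dev_mulr a0) HL.
  have := psd_mxtrace_conj_ge0 Xa Qs; rewrite /flow_at; lra.
have devb : dev b = Xa + D by rewrite /D addrC subrK.
rewrite /lyap -/Xa devb mxtrace_quad_expand //.
by rewrite {1}DE mulmxDl mxtraceD; lra.
Qed.

Lemma lyap_increment_quadratic T : 0 <= T -> exists C, forall a b,
  0 <= a -> a <= b -> b <= T -> lyap b - lyap a <= C * (b - a) ^+ 2.
Proof.
move=> T0.
have [M M0 flowM] := mx_ex_RInt_R_bounded (dev_increment (lexx 0) T0).1 T0.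
have [K K0 QK] := mx_ex_RInt_R_bounded (fun i j => ex_RInt_R_Q i j (lexx 0) T0) T0.
have incrM a b : 0 <= a -> a <= b -> b <= T -> mxbound (dev b - dev a) ((b - a) * M).
  move=> a0 ab bT; have [exF ->] := dev_increment a0 ab.
  apply: mxbound_mxRInt => // s /andP [sa sb].
  by apply: flowM; rewrite (le_trans a0 sa) (le_trans sb bT).
have [E0 E00 devE0] := mxbound_exists (dev 0).
have devE s : 0 <= s <= T -> mxbound (dev s) (E0 + T * M).
  move=> /andP [s0 sT] k i; have := incrM 0 s (lexx 0) s0 sT k i.
  have -> : dev s k i = (dev s - dev 0) k i + dev 0 k i.
    by rewrite [(dev s - _) k i]mxE [(- dev 0) k i]mxE subrK.
  have := ler_normD ((dev s - dev 0) k i) (dev 0 k i).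
  have := devE0 k i; have : s * M <= T * M by rewrite ler_wpM2r.
  rewrite subr0; lra.
have [om om0 Om_om] := mxbound_exists Om.
have [g g0 G_g] := mxbound_exists G^T.
set E := E0 + T * M.
exists (2 * (n%:R * (p%:R * ((p%:R * (n%:R * (K * M) * g)) * (p%:R * (om * E))))) +
        n%:R * (p%:R * (p%:R * (M * om) * M))) => a b a0 ab bT.
set h := b - a; have Xa_E : mxbound (dev a) E by apply: devE; rewrite a0 (le_trans ab bT).
have flow_err_h : mxbound (mxRInt (fun s => flow s - flow_at a s) a b)
    (h * (p%:R * (n%:R * (K * (h * M)) * g))).
  apply: mxbound_mxRInt => // [k i|s /andP [sa sb]]; first exact: ex_RInt_R_flow_err.
  have s0 := le_trans a0 sa; have sT := le_trans sb bT.
  rewrite /flow /flow_at -mulmxBl -mulmxBr.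
  apply: mxbound_mul G_g; apply: mxbound_mul; first by apply: QK; rewrite s0.
  by apply: mxbound_le (incrM a s a0 sa sT); rewrite ler_wpM2r // lerD2r.
have D_h := incrM a b a0 ab bT; rewrite -/h in D_h.
have tr1 := norm_mxtrace_le (mxbound_mul flow_err_h (mxbound_mul Om_om (mxbound_trmx Xa_E))).
have tr2 := norm_mxtrace_le (mxbound_mul (mxbound_mul D_h Om_om) (mxbound_trmx D_h)).
apply: le_trans (lyap_increment_le a0 ab) _.
have := ler_norm (\tr (mxRInt (fun s => flow s - flow_at a s) a b *m (Om *m (dev a)^T))).
have := ler_norm (\tr ((dev b - dev a) *m Om *m (dev b - dev a)^T)).
lra.
Qed.

Lemma lyap_nonincreasing t : 0 <= t -> lyap t <= lyap 0.
Proof.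
move=> t0; have [C lyapC] := lyap_increment_quadratic t0.
exact: le_of_quadratic_increments t0 lyapC.
Qed.

End ConsensusDynamics.

(* Connectivity of G is what makes the Lyapunov solution Om exist. *)
Theorem theorem2 (p n : nat) (G : 'M[R]_p) (r : 'cV[R]_p) (Om : 'M[R]_p)
  (HG : is_interconnection G) (Hconn : connected_graph G)
  (Hr1 : r^T *m G = 0) (Hr2 : r^T *m const_mx 1 = 1)
  (HOm : pd Om)
  (HLyap : (G - const_mx 1 *m r^T)^T *m Om + Om *m (G - const_mx 1 *m r^T) = - 1%:M)
  (Q : R -> 'M[R]_n) (HQ : riemann_int_psd Q)
  (x : R -> 'I_p -> 'cV[R]_n) (Hx : is_solution G Q x) :
  forall (t : R), 0 <= t -> forall i : 'I_p,
    vnorm (x t i - xbar r (x 0)) <=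
    Num.sqrt (sigma_max Om / sigma_min Om *
              \sum_(j < p) vnorm (x 0 j - xbar r (x 0)) ^+ 2).
Proof.
move=> t t0 i; have p_gt0 : (0 < p)%N := leq_ltn_trans (leq0n i) (ltn_ord i).
have [smin_gt0 _ _] := pd_qform_bounds p_gt0 HOm.
have [symOm _] := HOm.
have /andP [lyap_t _] := pd_mxtrace_conj_bounds (dev r x t) p_gt0 HOm.
have /andP [_ lyap_0] := pd_mxtrace_conj_bounds (dev r x 0) p_gt0 HOm.
have lyap_mono := lyap_nonincreasing HG Hx Hr1 Hr2 symOm HQ HLyap t0.
have dev_i : \sum_k dev r x t k i ^+ 2 <= \sum_k \sum_j dev r x t k j ^+ 2.
  by apply: ler_sum => k _; rewrite (bigD1 i) //= lerDl sumr_ge0 // => j _; exact: sqr_ge0.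
have -> : \sum_(j < p) vnorm (x 0 j - xbar r (x 0)) ^+ 2 = \sum_k \sum_j dev r x 0 k j ^+ 2.
  rewrite exchange_big; apply: eq_bigr => j _.
  by rewrite vnorm_dev sqr_sqrtr // sumr_ge0 // => k _; exact: sqr_ge0.
rewrite vnorm_dev; apply: ler_wsqrtr; rewrite mulrAC ler_pdivlMr //.
rewrite /lyap in lyap_mono; nra.
Qed.
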